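(* Let $k$ be a field, $R = k[[X]]$, and $M$ a free $R$-module of rank $h$. Let $0 = M_0 \subseteq M_1 \subseteq \dots \subseteq M_l = M$ be direct summands with $M_i$ free of rank $h_i$ ($h_0 = 0$). Let $\overline{M_i} := M_i \otimes_R k$, let $\overline{L}$ be a $k$-subspace of $\overline{M}$, and $d_i := \dim_k(\overline{L} \cap \overline{M_i})$ (so $0 \leq d_{i+1} - d_i \leq h_{i+1} - h_i$). Let $d_0' = 0, d_1', \dots, d_l'$ be integers with $d_l' = d_l$, $0 \leq d_{i+1}' - d_i' \leq h_{i+1} - h_i$ for $0 \le i \le l-1$, and $d_i' \leq d_i$ for $1 \leq i \leq l-1$. Then there exists a direct summand $L \subseteq M$ with $L \otimes_R k = \overline{L}$ (as subspaces of $\overline{M}$) such that $\dim_{k((X))}\big((L \otimes_R k((X))) \cap (M_i \otimes_R k((X)))\big) = d_i'$ for all $1 \leq i \leq l$. *)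

From HB Require Import structures.
From mathcomp Require Import all_boot all_order all_algebra.
From mathcomp Require Import boolp zify.

Set Implicit Arguments.
Unset Strict Implicit.
Unset Printing Implicit Defensive.

Import Order.TTheory GRing.Theory Num.Theory.
Local Open Scope ring_scope.

Section FPS.
Variable k : fieldType.

Record fps := Fps { fcoef : nat -> k }.

HB.instance Definition _ := gen_eqMixin fps.
HB.instance Definition _ := gen_choiceMixin fps.

Lemma fpsP (f g : fps) : (forall n, fcoef f n = fcoef g n) -> f = g.
Proof. by case: f g => f [g] /= H; congr Fps; apply: funext. Qed.

Definition fps0 := Fps (fun _ => 0).
Definition fpsopp f := Fps (fun n => - fcoef f n).
Definition fpsadd f g := Fps (fun n => fcoef f n + fcoef g n).

Lemma fpsaddA : associative fpsadd.
Proof. by move=> f g h; apply: fpsP => n /=; rewrite addrA. Qed.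
Lemma fpsaddC : commutative fpsadd.
Proof. by move=> f g; apply: fpsP => n /=; rewrite addrC. Qed.
Lemma fpsadd0 : left_id fps0 fpsadd.
Proof. by move=> f; apply: fpsP => n /=; rewrite add0r. Qed.
Lemma fpsaddN : left_inverse fps0 fpsopp fpsadd.
Proof. by move=> f; apply: fpsP => n /=; rewrite addNr. Qed.

HB.instance Definition _ :=
  GRing.isZmodule.Build fps fpsaddA fpsaddC fpsadd0 fpsaddN.

Definition fpsmul f g :=
  Fps (fun n => \sum_(i < n.+1) fcoef f i * fcoef g (n - i)).
Definition fps1 := Fps (fun n => (n == 0)%:R).

Definition fps_trunc n f : {poly k} := \poly_(i < n.+1) fcoef f i.

Lemma coef_fps_trunc n f i : (i <= n)%N -> (fps_trunc n f)`_i = fcoef f i.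
Proof. by rewrite coef_poly ltnS => ->. Qed.

Lemma fpsmulE m n f g : (m <= n)%N ->
  fcoef (fpsmul f g) m = (fps_trunc n f * fps_trunc n g)`_m.
Proof.
move=> mn; rewrite coefM /=; apply: eq_bigr => i _.
have im : (i <= m)%N by rewrite -ltnS.
rewrite !coef_fps_trunc //; first exact: leq_trans (leq_subr _ _) mn.
exact: leq_trans im mn.
Qed.

Lemma fpsmul_coef f g n :
  fcoef (fpsmul f g) n = \sum_(i < n.+1) fcoef f i * fcoef g (n - i).
Proof. by []. Qed.

Lemma fpsmulA : associative fpsmul.
Proof.
move=> f g h; apply: fpsP => n.
transitivity ((fps_trunc n f * (fps_trunc n g * fps_trunc n h))`_n).
  rewrite fpsmul_coef coefM; apply: eq_bigr => i _.
  rewrite coef_fps_trunc ?(ltnSE (ltn_ord i)) //.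
  by rewrite (fpsmulE _ _ (leq_subr i n)).
rewrite mulrA coefM fpsmul_coef; apply: eq_bigr => i _.
rewrite (coef_fps_trunc h (leq_subr i n)).
by rewrite (fpsmulE _ _ (ltnSE (ltn_ord i))).
Qed.

Lemma fpsmulC : commutative fpsmul.
Proof.
by move=> f g; apply: fpsP => n; rewrite !(fpsmulE _ _ (leqnn n)) mulrC.
Qed.

Lemma fpsmul1 : left_id fps1 fpsmul.
Proof.
move=> f; apply: fpsP => n /=; rewrite big_ord_recl /= subn0 mul1r.
by rewrite big1 ?addr0 // => i _; rewrite mul0r.
Qed.

Lemma fpsmulDl : left_distributive fpsmul fpsadd.
Proof.
move=> f g h; apply: fpsP => n /=; rewrite -big_split /=.
by apply: eq_bigr => i _; rewrite mulrDl.
Qed.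

Lemma fps1_neq0 : fps1 != fps0.
Proof. by apply/eqP => /(f_equal (fcoef ^~ 0%N)) /= /eqP; rewrite oner_eq0. Qed.

HB.instance Definition _ :=
  GRing.Zmodule_isComNzRing.Build fps fpsmulA fpsmulC fpsmul1 fpsmulDl fps1_neq0.

Lemma fcoef0 n : fcoef (0 : fps) n = 0. Proof. by []. Qed.
Lemma fcoefM (f g : fps) n :
  fcoef (f * g) n = \sum_(i < n.+1) fcoef f i * fcoef g (n - i).
Proof. by []. Qed.

Definition fpsunit : {pred fps} := fun f => `[< exists g, g * f = 1 >].
Definition fpsinv (f : fps) : fps :=
  match pselect (exists g, g * f = 1) with
  | left H => projT1 (cid H)
  | right _ => f
  end.

Lemma fpsmulVx : {in fpsunit, left_inverse 1 fpsinv *%R}.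
Proof.
move=> f Hf; have {Hf} /asboolP H : fpsunit f := Hf.
by rewrite /fpsinv; case: pselect => // H'; case: (cid H').
Qed.

Lemma fpsunitPl (f g : fps) : g * f = 1 -> fpsunit f.
Proof. by move=> H; apply/asboolP; exists g. Qed.

Lemma fpsinv_out : {in [predC fpsunit], fpsinv =1 id}.
Proof.
move=> f Hf; have {Hf} H : ~~ fpsunit f := Hf.
by rewrite /fpsinv; case: pselect => // H'; case/negP: H; apply/asboolP.
Qed.

HB.instance Definition _ :=
  GRing.ComNzRing_hasMulInverse.Build fps fpsmulVx fpsunitPl fpsinv_out.

Lemma fps_nz_coef (f : fps) : f != 0 -> exists i, fcoef f i != 0.
Proof.
move=> f0; apply: contrapT => H; move/eqP: f0; apply.
apply: fpsP => i; rewrite fcoef0; apply/eqP; apply: contrapT => Hi.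
by apply: H; exists i; apply/negP.
Qed.

Lemma fps_integral : GRing.integral_domain_axiom fps.
Proof.
move=> x y xy0; apply/negPn/negP; rewrite negb_or => /andP[x0 y0].
case: (ex_minnP (fps_nz_coef x0)) => i xi imin.
case: (ex_minnP (fps_nz_coef y0)) => j yj jmin.
have: fcoef (x * y) (i + j) = fcoef x i * fcoef y j.
  rewrite fcoefM.
  have iij : (i < (i + j).+1)%N by rewrite ltnS leq_addr.
  rewrite (bigD1 (Ordinal iij)) //= addKn big1 ?addr0 // => a /eqP /= ai.
  have [lt_ai | lt_ia | eq_ai] := ltngtP a i.
  - have : fcoef x a == 0 by apply: contraTT lt_ai => /imin; rewrite leqNgt.
    by move/eqP => ->; rewrite mul0r.
  - have : fcoef y (i + j - a) == 0.
      apply: contraTT lt_ia => /jmin H; rewrite -leqNgt.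
      by have := ltn_ord a; lia.
    by move/eqP => ->; rewrite mulr0.
  - by case: ai; apply: val_inj.
rewrite xy0 fcoef0 => /esym /eqP; rewrite mulf_eq0 (negbTE xi) (negbTE yj).
by [].
Qed.

HB.instance Definition _ := GRing.ComUnitRing_isIntegral.Build fps fps_integral.

Definition fps_const_coef (f : fps) : k := fcoef f 0.

End FPS.

Notation "{ 'fps' k }" := (fps k) (format "{ 'fps'  k }") : type_scope.
Notation "{ 'laurent' k }" := {fraction (fps k)} (format "{ 'laurent'  k }") : type_scope.

(* Submodules of R^h are given by a matrix whose ROWS generate them. *)

(* A reduction of a matrix over k[[X]] modulo X (i.e. the image of (-) (x)_R k). *)
Definition red_mx (k : fieldType) (m n : nat) (A : 'M[{fps k}]_(m, n)) : 'M[k]_(m, n) :=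
  map_mx (@fps_const_coef k) A.

Definition ext_mx (k : fieldType) (m n : nat) (A : 'M[{fps k}]_(m, n))
  : 'M[{laurent k}]_(m, n) := map_mx (@tofrac _) A.

Definition submod (R : comNzRingType) (m n h : nat) (A : 'M[R]_(m, h)) (B : 'M[R]_(n, h))
  : Prop := exists C : 'M[R]_(m, n), A = C *m B.

(* The rows of A (r x h) form a basis of a direct summand of R^h: they can be
   completed (by the rows of some B) to a basis of R^h, i.e.
   R^h = rowspan A (+) rowspan B with the rows of A free. *)
Definition basis_of_direct_summand (R : comNzRingType) (r h : nat) (A : 'M[R]_(r, h))
  : Prop :=
  exists (B : 'M[R]_(h - r, h)) (P : 'M[R]_(h, r + (h - r))),
    P *m col_mx A B = 1%:M /\ col_mx A B *m P = 1%:M.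

(* Work in a basis adapted to the flag.  A basis of k^h adapted to the
   reduced flag (M_i mod X) lifts to a basis Q of k[[X]]^h whose first h_i
   vectors span M_i, so in Q-coordinates each M_i is spanned by the first h_i
   coordinate vectors.  There, pick a basis c_1, ..., c_r of Lbar whose first
   d'_i vectors have support in the first h_i coordinates (possible since
   d'_i <= d_i), and an injection p with p(j) < h_i exactly when j < d'_i
   (possible by the constraints on the d'_i).  Let L be spanned by the rows
   c_j + X e_p(j).  It reduces to Lbar, which is free, so it is a direct
   summand.  Over k((X)), the rows j < d'_i lie in M_i, while the rows
   j >= d'_i, projected onto the coordinates >= h_i, have the minor
   det (X + C'), a monic polynomial in X; hence L and M_i meet in dimension
   exactly d'_i. *)

From HB Require Import structures.
From mathcomp Require Import all_boot all_order all_algebra.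
From mathcomp Require Import zify.

Set Implicit Arguments.
Unset Strict Implicit.
Unset Printing Implicit Defensive.

Import Order.TTheory GRing.Theory Num.Theory.
Local Open Scope ring_scope.

Section PowerSeries.
Variable k : fieldType.
Local Notation R := {fps k}.

Lemma fps_const_coef_is_zmod_morphism : zmod_morphism (@fps_const_coef k).
Proof. by []. Qed.

Lemma fps_const_coef_is_monoid_morphism : monoid_morphism (@fps_const_coef k).
Proof. by split=> // f g; rewrite /fps_const_coef fcoefM big_ord1. Qed.

HB.instance Definition _ := GRing.isZmodMorphism.Build R k (@fps_const_coef k)
  fps_const_coef_is_zmod_morphism.
HB.instance Definition _ := GRing.isMonoidMorphism.Build R k (@fps_const_coef k)
  fps_const_coef_is_monoid_morphism.

Definition fps_of_poly (p : {poly k}) : R := Fps (fun n => p`_n).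

Lemma fps_of_poly_is_zmod_morphism : zmod_morphism fps_of_poly.
Proof. by move=> p q; apply: fpsP => n; rewrite /= coefB. Qed.

Lemma fps_of_poly_is_monoid_morphism : monoid_morphism fps_of_poly.
Proof.
split; first by apply: fpsP => n; rewrite /= coef1.
by move=> p q; apply: fpsP => n; rewrite /= coefM.
Qed.

HB.instance Definition _ := GRing.isZmodMorphism.Build {poly k} R fps_of_poly
  fps_of_poly_is_zmod_morphism.
HB.instance Definition _ := GRing.isMonoidMorphism.Build {poly k} R fps_of_poly
  fps_of_poly_is_monoid_morphism.

Lemma fps_of_poly_inj : injective fps_of_poly.
Proof. by move=> p q [/(congr1 (fun c => c _)) pq]; apply/polyP => n; rewrite pq. Qed.

Section Inverse.
Variable f : R.
Let a := (fcoef f 0)^-1.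

(* The first [n.+1] coefficients of [f^-1], by the recursion that the
   coefficients of [f * f^-1 = 1] impose. *)
Fixpoint inv_coefs n : seq k :=
  if n is n'.+1 then
    rcons (inv_coefs n')
      (- a * \sum_(i < n) fcoef f i.+1 * (inv_coefs n')`_(n' - i))
  else [:: a].

Lemma size_inv_coefs n : size (inv_coefs n) = n.+1.
Proof. by elim: n => //= n IHn; rewrite size_rcons IHn. Qed.

Lemma nth_inv_coefs m n : (n <= m)%N -> (inv_coefs m)`_n = (inv_coefs n)`_n.
Proof.
elim: m => [|m IHm]; first by rewrite leqn0 => /eqP ->.
rewrite leq_eqVlt => /orP[/eqP -> // | ltnm].
by rewrite /= nth_rcons size_inv_coefs ltnm IHm.
Qed.

Definition fps_inv : R := Fps (fun n => (inv_coefs n)`_n).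

Lemma fcoef_fps_invS n :
  fcoef fps_inv n.+1 = - a * \sum_(i < n.+1) fcoef f i.+1 * fcoef fps_inv (n - i).
Proof.
rewrite /= nth_rcons size_inv_coefs ltnn eqxx; congr (_ * _).
by apply: eq_bigr => i _; rewrite nth_inv_coefs ?leq_subr.
Qed.

Lemma mulr_fps_inv : fcoef f 0 != 0 -> f * fps_inv = 1.
Proof.
move=> f0; apply: fpsP => -[|n]; first by rewrite fcoefM big_ord1 /= mulfV.
rewrite fcoefM big_ord_recl subn0 fcoef_fps_invS mulrA mulrN mulfV // mulN1r.
rewrite addrC; apply/eqP; rewrite subr_eq0; apply/eqP.
by apply: eq_bigr => i _; rewrite /= subSS.
Qed.

End Inverse.

Lemma fps_unitP (f : R) : fps_const_coef f != 0 -> f \is a GRing.unit.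
Proof. by move=> f0; apply/unitrPr; exists (fps_inv f); apply: mulr_fps_inv. Qed.

End PowerSeries.

Section PowerSeriesMatrices.
Variable k : fieldType.
Local Notation R := {fps k}.

Lemma red_mxM m n p (A : 'M[R]_(m, n)) (B : 'M[R]_(n, p)) :
  red_mx (A *m B) = red_mx A *m red_mx B.
Proof. exact: map_mxM. Qed.

Lemma ext_mxM m n p (A : 'M[R]_(m, n)) (B : 'M[R]_(n, p)) :
  ext_mx (A *m B) = ext_mx A *m ext_mx B.
Proof. exact: map_mxM. Qed.

Lemma red_submod m n h (A : 'M[R]_(m, h)) (B : 'M[R]_(n, h)) :
  submod A B -> (red_mx A <= red_mx B)%MS.
Proof. by case=> C ->; rewrite red_mxM submxMl. Qed.

Lemma ext_submod m n h (A : 'M[R]_(m, h)) (B : 'M[R]_(n, h)) :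
  submod A B -> (ext_mx A <= ext_mx B)%MS.
Proof. by case=> C ->; rewrite ext_mxM submxMl. Qed.

Lemma red_unitmx n (A : 'M[R]_n) : red_mx A \in unitmx -> A \in unitmx.
Proof. by rewrite !unitmxE det_map_mx unitfE; apply: fps_unitP. Qed.

Lemma ext_unitmx n (A : 'M[R]_n) : red_mx A \in unitmx -> ext_mx A \in unitmx.
Proof.
move/red_unitmx; rewrite !unitmxE det_map_mx unitfE tofrac_eq0.
by apply: contraTneq => ->; rewrite unitr0.
Qed.

Definition fps_cst_mx m n (A : 'M[k]_(m, n)) : 'M[R]_(m, n) :=
  map_mx (fun c => fps_of_poly c%:P) A.

Lemma red_fps_cst_mx m n (A : 'M[k]_(m, n)) : red_mx (fps_cst_mx A) = A.
Proof. by apply/matrixP => i j; rewrite !mxE /= coefC. Qed.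

Lemma direct_summandP r h (A : 'M[R]_(r, h)) :
  basis_of_direct_summand A <-> row_free (red_mx A).
Proof.
split=> [[B [P [_ AB_P]]] | freeA].
  have rk_full : (r + (h - r) <= \rank (col_mx (red_mx A) (red_mx B)))%N.
    have := congr1 (@red_mx k _ _) AB_P; rewrite red_mxM /red_mx map_col_mx map_mx1.
    by rewrite -[X in (X <= _)%N](mxrank1 k) => <-; apply: mxrankM_maxl.
  have := mxrank_adds_leqif (red_mx A) (red_mx B).
  rewrite (addsmxE (red_mx A) (red_mx B)).1 => -[rk_adds _].
  rewrite /row_free eqn_leq rank_leq_row /=.
  have := rank_leq_row (red_mx B); lia.
have le_rh : (r <= h)%N by rewrite -(eqP freeA) rank_leq_col.
have [B eqB] : exists B : 'M[k]_(h - r, h), (B :=: (red_mx A)^C%MS)%MS.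
  have -> : (h - r = \rank (red_mx A)^C)%N by rewrite mxrank_compl (eqP freeA).
  exists (row_base (red_mx A)^C%MS); exact: eq_row_base.
have full_AB : row_full (red_mx (col_mx A (fps_cst_mx B))).
  rewrite [red_mx _]map_col_mx -[map_mx _ (fps_cst_mx B)]/(red_mx _) red_fps_cst_mx.
  rewrite /row_full -(addsmxE _ _).1 (adds_eqmx (eqmx_refl _) eqB).
  exact: addsmx_compl_full.
exists (fps_cst_mx B); move: (col_mx A _) full_AB; rewrite (subnKC le_rh).
move=> N; rewrite row_full_unit => /red_unitmx unitN.
by exists (invmx N); split; [exact: mulVmx | exact: mulmxV].
Qed.

End PowerSeriesMatrices.

Section PidEntries.
Variable R : pzRingType.

Lemma pid_mulmxE m n r (A : 'M[R]_(m, n)) i j :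
  (pid_mx r *m A) i j = (i < r)%:R * A i j.
Proof.
rewrite !mxE (bigD1 i) //= big1 => [|q qi]; first by rewrite !mxE eqxx addr0.
by rewrite !mxE [(i == q :> nat)]eq_sym val_eqE (negbTE qi) mul0r.
Qed.

Lemma mulmx_copidE m n r (A : 'M[R]_(m, n)) i j :
  (A *m copid_mx r) i j = A i j * (r <= j)%:R.
Proof.
rewrite mulmxBr mulmx1 !mxE (bigD1 j) //= big1 => [|q qj]; last first.
  by rewrite !mxE val_eqE (negbTE qj) mulr0.
rewrite !mxE eqxx addr0 [(r <= j)%N]leqNgt.
by case: (j < r)%N; rewrite ?mulr1 ?mulr0 ?subrr ?subr0.
Qed.

End PidEntries.

Lemma homo_leq_prefix (f : nat -> nat) l :
  (forall i, (i < l)%N -> (f i <= f i.+1)%N) ->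
  forall i j, (i <= j <= l)%N -> (f i <= f j)%N.
Proof.
move=> f_step i j /andP[]; elim: j => [|j IHj]; first by rewrite leqn0 => /eqP ->.
rewrite leq_eqVlt => /orP[/eqP -> // | /IHj le_ij lt_jl].
exact: leq_trans (le_ij (ltnW lt_jl)) (f_step j lt_jl).
Qed.

Section Flags.
Variables (F : fieldType) (h : nat).

Lemma mxrank_diff m1 m2 (A : 'M[F]_(m1, h)) (B : 'M[F]_(m2, h)) :
  (B <= A)%MS -> \rank (A :\: B)%MS = (\rank A - \rank B)%N.
Proof.
move=> BA; have := mxrank_cap_compl A B.
by rewrite (capmx_idPr BA); lia.
Qed.

Lemma adds_diff m1 m2 (A : 'M[F]_(m1, h)) (B : 'M[F]_(m2, h)) :
  (B <= A)%MS -> (B + (A :\: B) :=: A)%MS.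
Proof.
move=> BA; rewrite addsmxC; apply: eqmx_trans (addsmx_diff_cap_eq A B).
by apply: adds_eqmx => //; apply: eqmx_sym; apply/capmx_idPr.
Qed.

(* [shift_mx n0 m *m B] is [B] moved down to the rows [n0, n0 + m). *)
Definition shift_mx (n0 m : nat) : 'M[F]_(h, m) :=
  \matrix_(p, a) (p == (n0 + a)%N :> nat)%:R.

Lemma pid_shift_mx n n0 m : (n0 + m <= n)%N -> pid_mx n *m shift_mx n0 m = shift_mx n0 m.
Proof.
move=> le_n; apply/matrixP => p a; rewrite pid_mulmxE !mxE.
case: eqP => [-> | _]; rewrite ?mulr0 // (_ : (n0 + a < n)%N) ?mulr1 //.
by have := ltn_ord a; lia.
Qed.

Lemma pid_shift_mx0 n n0 m : (n <= n0)%N ->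
  (pid_mx n : 'M_h) *m shift_mx n0 m = 0.
Proof.
move=> le_n; apply/matrixP => p a; rewrite pid_mulmxE !mxE.
by case: eqP => [-> | _]; rewrite ?mulr0 // (_ : (n0 + a < n)%N = false) ?mul0r //; lia.
Qed.

Lemma shift_mx_eqmx n0 m (B : 'M[F]_(m, h)) :
  (n0 + m <= h)%N -> (shift_mx n0 m *m B :=: B)%MS.
Proof.
move=> le_h; apply/eqmxP/andP; split; first exact: submxMl.
suff inv : (shift_mx n0 m)^T *m shift_mx n0 m = 1%:M.
  by rewrite -{1}[B]mul1mx -inv -mulmxA submxMl.
apply/matrixP => a b; rewrite !mxE.
have lt_h : (n0 + a < h)%N by have := ltn_ord a; lia.
rewrite (bigD1 (Ordinal lt_h)) //= big1 => [|q qa]; last first.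
  by rewrite !mxE; case: eqP => [eq_q | _]; [case/eqP: qa; apply: val_inj | rewrite mul0r].
by rewrite !mxE eqxx mul1r eqn_add2l addr0.
Qed.

Section AdaptedBasis.
Variables (l : nat) (W : nat -> 'M[F]_h).
Hypotheses (W0 : W 0 = 0) (W_full : row_full (W l)).
Hypothesis W_mono : forall i, (i < l)%N -> (W i <= W i.+1)%MS.

Local Notation n i := (\rank (W i)).

Lemma flag_rank_le i j : (i <= j <= l)%N -> (n i <= n j)%N.
Proof. by apply: (@homo_leq_prefix (fun i => \rank (W i))) => m /W_mono/mxrankS. Qed.

Lemma rank_flag_diff i : (i < l)%N -> \rank (W i.+1 :\: W i)%MS = (n i.+1 - n i)%N.
Proof. by move/W_mono/mxrank_diff. Qed.

Let layer i := shift_mx (n i) (\rank (W i.+1 :\: W i)%MS) *m row_base (W i.+1 :\: W i)%MS.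
Let layers i := \sum_(0 <= j < i) layer j.

Lemma pid_layer i j : (i <= l)%N -> (j < l)%N ->
  pid_mx (n i) *m layer j = if (j < i)%N then layer j else 0.
Proof.
move=> il jl; rewrite mulmxA; case: ltnP => [lt_ji | le_ij].
  have le_ji : (n j.+1 <= n i)%N by apply: flag_rank_le; rewrite lt_ji il.
  have le_jj : (n j <= n j.+1)%N by apply: flag_rank_le; rewrite leqnSn jl.
  by rewrite pid_shift_mx // rank_flag_diff // subnKC.
have le_nij : (n i <= n j)%N by apply: flag_rank_le; rewrite le_ij ltnW.
by rewrite (pid_shift_mx0 _ le_nij) mul0mx.
Qed.

Lemma pid_layers i m : (i <= m <= l)%N -> pid_mx (n i) *m layers m = layers i.
Proof.
case/andP=> le_im le_ml; rewrite /layers mulmx_sumr (big_cat_nat (leq0n i) le_im) /=.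
rewrite [X in _ + X]big_nat_cond [X in _ + X]big1 ?addr0 => [|j /andP[/andP[le_ij lt_jm] _]].
  by apply: eq_big_nat => j /andP[_ lt_ji]; rewrite pid_layer ?lt_ji //; lia.
by rewrite pid_layer ?ltnNge ?le_ij //; lia.
Qed.

Lemma layers_eqmx i : (i <= l)%N -> (layers i :=: W i)%MS.
Proof.
elim: i => [_ | i IHi lt_il]; first by rewrite W0 /layers big_geq.
have layers_S : layers i.+1 = layers i + layer i by rewrite /layers big_nat_recr.
have layer_eq : (layer i :=: W i.+1 :\: W i)%MS.
  apply: eqmx_trans (eq_row_base _); apply: shift_mx_eqmx.
  have le_ii : (n i <= n i.+1)%N by apply: flag_rank_le; rewrite leqnSn lt_il.
  by rewrite rank_flag_diff // subnKC // rank_leq_col.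
apply: eqmx_trans (adds_diff (W_mono lt_il)).
apply: eqmx_trans (adds_eqmx (IHi (ltnW lt_il)) layer_eq).
(* [layers i] and [layer i] have disjoint row supports, so the projections
   [pid_mx (n i)] and [copid_mx (n i)] recover both from their sum. *)
have pid_layers_S : pid_mx (n i) *m layers i.+1 = layers i by rewrite pid_layers ?leqnSn.
apply/eqmxP/andP; split; first by rewrite layers_S addmx_sub_adds.
rewrite addsmx_sub -{1}pid_layers_S submxMl /=.
suff <- : copid_mx (n i) *m layers i.+1 = layer i by apply: submxMl.
by rewrite mulmxBl mul1mx pid_layers_S layers_S addrC addKr.
Qed.

Lemma flag_full_basis : exists2 Q : 'M[F]_h, Q \in unitmx &
  forall i, (i <= l)%N -> ((pid_mx (\rank (W i)) : 'M_h) *m Q == W i)%MS.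
Proof.
exists (layers l) => [|i il].
  by rewrite -row_full_unit /row_full (layers_eqmx (leqnn l)).1.
have il' : (i <= l <= l)%N by rewrite il leqnn.
by rewrite (pid_layers il'); apply/eqmxP/layers_eqmx.
Qed.

End AdaptedBasis.

Lemma flag_basis l (W : nat -> 'M[F]_h) :
  W 0 = 0 -> (forall i, (i < l)%N -> (W i <= W i.+1)%MS) ->
  exists2 Q : 'M[F]_h, Q \in unitmx &
    forall i, (i <= l)%N -> ((pid_mx (\rank (W i)) : 'M_h) *m Q == W i)%MS.
Proof.
move=> W0 W_mono; pose W' i := if (i <= l)%N then W i else 1%:M.
have W'_mono i : (i < l.+1)%N -> (W' i <= W' i.+1)%MS.
  rewrite ltnS /W' /= => ->; case: (ltnP i l) => [lt_il | _]; [exact: W_mono | exact: submx1].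
have [|Q unitQ adaptedQ] := @flag_full_basis l.+1 W' W0 _ W'_mono.
  by rewrite /W' ltnn row_full_unit unitmx1.
by exists Q => // i il; have := adaptedQ i (leq_trans il (leqnSn l)); rewrite /W' il.
Qed.

Lemma pid_rect_eqmx r (Q : 'M[F]_h) :
  (r <= h)%N -> ((pid_mx r : 'M_(r, h)) *m Q :=: (pid_mx r : 'M_h) *m Q)%MS.
Proof.
move=> le_rh; apply/eqmxP/andP; split.
  rewrite -[X in (X *m Q <= _)%MS](_ : pid_mx r *m (pid_mx r : 'M_h) = _).
    by rewrite -mulmxA submxMl.
  by rewrite mul_pid_mx; congr pid_mx; lia.
rewrite -[X in (X *m Q <= _)%MS](_ : (pid_mx r : 'M_(h, r)) *m pid_mx r = _).
  by rewrite -mulmxA submxMl.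
by rewrite mul_pid_mx; congr pid_mx; lia.
Qed.

Lemma flag_row_basis l (W : nat -> 'M[F]_h) (a : nat -> nat) :
  W 0 = 0 -> (forall i, (i < l)%N -> (W i <= W i.+1)%MS) ->
  (forall i, (i <= l)%N -> (a i <= \rank (W i))%N) -> a l = \rank (W l) ->
  exists C : 'M[F]_(a l, h), [/\ row_free C, (C == W l)%MS &
    forall i, (i <= l)%N -> ((pid_mx (a i) : 'M_(a l)) *m C <= W i)%MS].
Proof.
move=> W0 W_mono a_le a_l; have [Q unitQ adaptedQ] := flag_basis W0 W_mono.
have freeQ : row_free Q by rewrite row_free_unit.
have rank_le i : (\rank (W i) <= h)%N := rank_leq_col (W i).
exists ((pid_mx (a l) : 'M_(a l, h)) *m Q); split.
- by rewrite /row_free mxrankMfree // rank_pid_mx // a_l.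
- have le_lh : (a l <= h)%N by rewrite a_l rank_le.
  apply/eqmxP; apply: eqmx_trans (pid_rect_eqmx Q le_lh) _.
  by apply/eqmxP; rewrite a_l; apply: adaptedQ.
move=> i il; have /andP[sub_Wi _] := adaptedQ i il; apply: submx_trans _ sub_Wi.
have le_ail : (a i <= a l)%N.
  apply: leq_trans (a_le i il) _; rewrite a_l.
  by apply: flag_rank_le W_mono _ _ _; rewrite il leqnn.
have -> : (pid_mx (a i) : 'M_(a l)) *m ((pid_mx (a l) : 'M_(a l, h)) *m Q) =
    (pid_mx (a i) : 'M_(a l, h)) *m pid_mx (\rank (W i)) *m Q.
  by rewrite !mulmxA !mul_pid_mx; congr (pid_mx _ *m Q); have := a_le i il; have := rank_le i; lia.
by rewrite -mulmxA submxMl.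
Qed.

Lemma coordinate_row_basis l (hs d : nat -> nat) (Lb : 'M[F]_h) :
  hs 0 = 0%N -> hs l = h -> (forall i, (i < l)%N -> (hs i <= hs i.+1)%N) ->
  (forall i, (i <= l)%N -> (d i <= \rank (Lb :&: (pid_mx (hs i) : 'M_h)))%N) ->
  d l = \rank Lb ->
  exists C : 'M[F]_(d l, h), [/\ row_free C, (C == Lb)%MS &
    forall i, (i <= l)%N -> (pid_mx (d i) : 'M_(d l)) *m C *m copid_mx (hs i) = 0].
Proof.
move=> hs0 hs_l hs_step d_le d_l.
have hs_le i : (i <= l)%N -> (hs i <= h)%N.
  by move=> il; rewrite -hs_l; apply: (homo_leq_prefix hs_step); rewrite il leqnn.
pose S i := (Lb :&: (pid_mx (hs i) : 'M_h))%MS.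
have S0 : S 0 = 0 by rewrite /S hs0 pid_mx_0 capmx0.
have S_mono i : (i < l)%N -> (S i <= S i.+1)%MS.
  move=> il; apply: capmxS => //.
  have -> : (pid_mx (hs i) : 'M[F]_h) = pid_mx (hs i) *m (pid_mx (hs i.+1) : 'M_h).
    by rewrite mul_pid_mx; congr pid_mx; have := hs_step i il; have := hs_le i.+1 il; lia.
  exact: submxMl.
have S_l : S l = Lb by rewrite /S hs_l pid_mx_1 capmx1.
have [C [freeC C_Lb C_low]] := flag_row_basis S0 S_mono d_le (etrans d_l (congr1 _ (esym S_l))).
exists C; split=> [||i il]; [exact: freeC | by rewrite -S_l |].
have /submxP[D ->] := submx_trans (C_low i il) (capmxSr _ _).
by rewrite -mulmxA mul_pid_mx_copid ?mulmx0 ?hs_le.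
Qed.

End Flags.

Section RankFacts.
Variable F : fieldType.

Lemma mxrank_mxsub m n m' n' (f : 'I_m' -> 'I_m) (g : 'I_n' -> 'I_n) (A : 'M[F]_(m, n)) :
  (\rank (mxsub f g A) <= \rank A)%N.
Proof.
rewrite -[A in mxsub _ _ A]mulmx1 mxsub_mul rowsubE -mulmxA.
exact: leq_trans (mxrankM_maxr _ _) (mxrankM_maxl _ _).
Qed.

Lemma mxrank_cap_mulmx m1 m2 n (A : 'M[F]_(m1, n)) (B : 'M[F]_(m2, n)) (Q : 'M[F]_n) :
  Q \in unitmx -> \rank (A *m Q :&: B *m Q)%MS = \rank (A :&: B)%MS.
Proof.
move=> unitQ; have freeQ : row_free Q by rewrite row_free_unit.
have := mxrank_sum_cap (A *m Q) (B *m Q); have := mxrank_sum_cap A B.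
by rewrite -(addsmxMr A B Q).1 !mxrankMfree //; lia.
Qed.

Lemma mxrank_cap_pid m n (A : 'M[F]_(m, n)) c : (c <= n)%N ->
  (\rank (A :&: (pid_mx c : 'M_n)) + \rank (A *m copid_mx c) = \rank A)%N.
Proof.
move=> le_cn; rewrite -(mxrank_mul_ker A (copid_mx c)) addnC; congr (_ + _)%N.
have ker_copid : ((pid_mx c : 'M_n) :=: kermx (copid_mx c : 'M[F]_n))%MS.
  apply/eqmxP/andP; split; first by apply/sub_kermxP; rewrite mul_pid_mx_copid.
  rewrite -[X in (X <= _)%MS]mulmx1 -(subrK (pid_mx c) 1%:M) mulmxDr.
  by rewrite (sub_kermxP (submx_refl _)) add0r submxMl.
exact: (cap_eqmx (eqmx_refl A) ker_copid).1.
Qed.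

End RankFacts.

(* The witness sends [j] with [d i <= j < d i.+1] to [hs i + (j - d i)]. *)
Lemma interleaving l (hs d : nat -> nat) : d 0 = 0%N ->
  (forall i, (i < l)%N -> (d i <= d i.+1)%N /\ (d i.+1 + hs i <= d i + hs i.+1)%N) ->
  exists p : nat -> nat, {in gtn (d l) &, injective p} /\
    forall i j, (i <= l)%N -> (j < d l)%N -> (p j < hs i)%N = (j < d i)%N.
Proof.
move=> d0; elim: l => [_ | l IHl step].
  by exists id; split=> [j|i j]; rewrite ?inE d0.
have [p [p_inj p_hs]] := IHl (fun i il => step i (ltnW il)).
have mono f : (forall i, (i < l.+1)%N -> (f i <= f i.+1)%N) ->
    forall i, (i <= l)%N -> (f i <= f l)%N.
  by move=> f_step i il; apply: homo_leq_prefix f_step _ _ _; rewrite il ltnW.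
have d_mono : forall i, (i <= l)%N -> (d i <= d l)%N by apply: mono => i /step[].
have hs_mono : forall i, (i <= l)%N -> (hs i <= hs l)%N by apply: mono => i /step; lia.
have [le_dl le_dhl] := step l (ltnSn l).
exists (fun j => if (j < d l)%N then p j else hs l + (j - d l))%N; split.
  move=> j1 j2 _ _.
  case: (ltnP j1 (d l)) => lt1; case: (ltnP j2 (d l)) => lt2 eq_p; first exact: p_inj.
  - by have := p_hs l j1 (leqnn l) lt1; rewrite lt1; lia.
  - by have := p_hs l j2 (leqnn l) lt2; rewrite lt2; lia.
  - lia.
move=> i j; rewrite leq_eqVlt ltnS => /orP[/eqP -> | il] jl.
  case: (ltnP j (d l)) => [lt_jl | ?]; last by lia.
  by have := p_hs l j (leqnn l) lt_jl; rewrite lt_jl; lia.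
case: (ltnP j (d l)) => [lt_jl | le_lj]; first exact: p_hs.
have := d_mono i il; have := hs_mono i il; lia.
Qed.

Section Perturbation.
Variables (k : fieldType) (r h : nat) (C : 'M[k]_(r, h)) (p : 'I_r -> 'I_h).
Hypothesis p_inj : injective p.

Definition perturb_mx : 'M[{poly k}]_(r, h) :=
  map_mx polyC C + 'X *: \matrix_(j, q) (q == p j)%:R.

Variables (K : fieldType) (psi : {rmorphism {poly k} -> K}).
Hypothesis psi_inj : injective psi.

Lemma rank_perturb_copid a c :
  (a <= r)%N -> (pid_mx a : 'M_r) *m C *m (copid_mx c : 'M_h) = 0 ->
  (forall j, (p j < c) = (j < a))%N ->
  \rank (map_mx psi perturb_mx *m (copid_mx c : 'M_h)) = (r - a)%N.
Proof.
move=> le_ar C_low p_low; rewrite -(map_copid_mx psi) -map_mxM.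
set N := perturb_mx *m _.
apply/eqP; rewrite eqn_leq; apply/andP; split.
  have N_low : (pid_mx a : 'M_r) *m N = 0.
    apply/matrixP => j q; rewrite pid_mulmxE [RHS]mxE.
    case: ltnP => [lt_ja | _]; last by rewrite mul0r.
    have := congr1 (fun M : 'M[k]_(r, h) => M j q) C_low; rewrite mulmx_copidE pid_mulmxE lt_ja.
    rewrite /N mulmx_copidE !mxE !mul1r; case: leqP => [le_cq | _]; last by rewrite !mulr0.
    rewrite !mulr1 => ->; rewrite rmorph0 add0r (_ : q == p j = false) ?mulr0 //.
    by apply: contraTF le_cq => /eqP ->; rewrite -ltnNge p_low.
  have -> : N = copid_mx a *m N by rewrite mulmxBl mul1mx N_low subr0.
  by rewrite map_mxM map_copid_mx (leq_trans (mxrankM_maxl _ _)) ?rank_copid_mx.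
have lt_r (b : 'I_(r - a)) : (a + b < r)%N by have := ltn_ord b; lia.
pose f b := Ordinal (lt_r b); pose g b := p (f b).
apply: leq_trans (mxrank_mxsub f g _); rewrite -map_mxsub.
(* On rows [a + b] and columns [p (a + b)], the [X] terms sit on the diagonal. *)
have -> : mxsub f g N = char_poly_mx (- mxsub f g C).
  apply/matrixP => b b'; rewrite mxE mulmx_copidE !mxE.
  rewrite (_ : (c <= g b')%N) ?mulr1; last by rewrite leqNgt p_low /= -ltnNge leq_addr.
  rewrite (inj_eq p_inj) -val_eqE /= eqn_add2l val_eqE eq_sym rmorphN opprK addrC.
  by case: (b == b'); rewrite ?mulr1 ?mulr0 ?mulr1n ?mulr0n.
rewrite mxrank_unit // unitmxE det_map_mx unitfE -/(char_poly _).
by rewrite -(rmorph0 psi) (inj_eq psi_inj) monic_neq0 ?char_poly_monic.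
Qed.

End Perturbation.


Section StandardFlag.
Variable k : fieldType.

Definition laurent_of_poly : {rmorphism {poly k} -> {laurent k}} :=
  @tofrac _ \o @fps_of_poly k.

Lemma laurent_of_poly_inj : injective laurent_of_poly.
Proof. by move=> p q /eqP; rewrite tofrac_eq => /eqP /fps_of_poly_inj. Qed.

Lemma red_perturb_mx r h (C : 'M[k]_(r, h)) p :
  red_mx (map_mx (@fps_of_poly k) (perturb_mx C p)) = C.
Proof. by apply/matrixP => j q; rewrite !mxE /= coefD coefC coefXM addr0. Qed.

Lemma ext_perturb_mx r h (C : 'M[k]_(r, h)) p :
  ext_mx (map_mx (@fps_of_poly k) (perturb_mx C p)) = map_mx laurent_of_poly (perturb_mx C p).
Proof. by apply/matrixP => j q; rewrite !mxE. Qed.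

Lemma coordinate_flag_lift h l (hs d : nat -> nat) (Lb : 'M[k]_h) :
  hs 0 = 0%N -> hs l = h -> d 0 = 0%N ->
  (forall i, (i < l)%N -> (d i <= d i.+1)%N /\ (d i.+1 + hs i <= d i + hs i.+1)%N) ->
  (forall i, (i <= l)%N -> (d i <= \rank (Lb :&: (pid_mx (hs i) : 'M_h)))%N) ->
  d l = \rank Lb ->
  exists r (L : 'M[{fps k}]_(r, h)), [/\ row_free (red_mx L), (red_mx L == Lb)%MS &
    forall i, (i <= l)%N -> \rank (ext_mx L :&: (pid_mx (hs i) : 'M_h))%MS = d i].
Proof.
move=> hs0 hs_l d0 step d_le d_l.
have hs_step i : (i < l)%N -> (hs i <= hs i.+1)%N by move/step; lia.
have hs_le i : (i <= l)%N -> (hs i <= h)%N.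
  by move=> il; rewrite -hs_l; apply: (homo_leq_prefix hs_step); rewrite il leqnn.
have d_le_l i : (i <= l)%N -> (d i <= d l)%N.
  by move=> il; apply: (homo_leq_prefix (fun j jl => (step j jl).1)); rewrite il leqnn.
have [C [freeC C_Lb C_copid]] := coordinate_row_basis hs0 hs_l hs_step d_le d_l.
have [p [p_inj p_hs]] := interleaving d0 step.
have p_lt (j : 'I_(d l)) : (p j < h)%N by rewrite -hs_l p_hs ?ltn_ord.
pose q j := Ordinal (p_lt j).
have q_inj : injective q by move=> j j' [] /p_inj eq_j; apply/val_inj/eq_j; rewrite inE.
exists (d l), (map_mx (@fps_of_poly k) (perturb_mx C q)); rewrite red_perturb_mx.
split=> [|| i il]; [exact: freeC | exact: C_Lb |].
rewrite ext_perturb_mx; set P := map_mx _ _.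
have := mxrank_cap_pid P (hs_le i il).
have -> : \rank P = d l.
  have := rank_perturb_copid (C := C) q_inj laurent_of_poly_inj (leq0n (d l)) (c := 0).
  rewrite subn0 /copid_mx !pid_mx_0 !subr0 !mulmx1 mul0mx.
  by apply=> // j; rewrite !ltn0.
rewrite (rank_perturb_copid (C := C) q_inj laurent_of_poly_inj (d_le_l i il) (C_copid i il)).
  by have := d_le_l i il; lia.
by move=> j; apply: p_hs; rewrite ?ltn_ord.
Qed.

End StandardFlag.

Section SummandFlag.
Variables (k : fieldType) (h l : nat) (hs : nat -> nat).
Variable Ms : forall i, 'M[{fps k}]_(hs i, h).
Hypothesis hs0 : hs 0 = 0%N.
Hypothesis Ms_summand : forall i, (i <= l)%N -> basis_of_direct_summand (Ms i).
Hypothesis Ms_mono : forall i, (i < l)%N -> submod (Ms i) (Ms i.+1).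
Hypothesis Ms_full : submod (1%:M : 'M[{fps k}]_h) (Ms l).

Lemma rank_red_summand i : (i <= l)%N -> \rank (red_mx (Ms i)) = hs i.
Proof. by move/Ms_summand/direct_summandP/eqP. Qed.

Lemma summand_rank_mono i j : (i <= j <= l)%N -> (hs i <= hs j)%N.
Proof.
apply: homo_leq_prefix => m ml.
rewrite -(rank_red_summand (ltnW ml)) -(rank_red_summand ml).
exact/mxrankS/red_submod/Ms_mono.
Qed.

Lemma summand_rank_top : hs l = h.
Proof.
rewrite -(rank_red_summand (leqnn l)); apply/eqP; rewrite eqn_leq rank_leq_col.
rewrite -[X in (X <= _)%N](mxrank1 k h) -(map_mx1 (@fps_const_coef k)).
exact/mxrankS/red_submod.
Qed.

Lemma summand_rank_le i : (i <= l)%N -> (hs i <= h)%N.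
Proof. by move=> il; rewrite -summand_rank_top; apply: summand_rank_mono; rewrite il leqnn. Qed.

Section Lift.
Variable Qbar : 'M[k]_h.
Hypothesis Qbar_adapted :
  forall i, (i <= l)%N -> ((pid_mx (hs i) : 'M_h) *m Qbar <= red_mx (Ms i))%MS.

Let band j : 'M[{fps k}]_h := pid_mx (hs j.+1) - pid_mx (hs j).
Let Y j : 'M_(h, hs j) := fps_cst_mx ((pid_mx (hs j) : 'M_h) *m Qbar *m pinvmx (red_mx (Ms j))).
Let Qpart i := \sum_(0 <= j < i) band j *m (Y j.+1 *m Ms j.+1).

Lemma pid_band i j : (i <= l)%N -> (j < l)%N ->
  (pid_mx (hs i) : 'M_h) *m band j = if (j < i)%N then band j else 0.
Proof.
move=> il jl.
have le_j : (hs j <= hs j.+1)%N by apply: summand_rank_mono; rewrite leqnSn jl.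
have hs_le_i := summand_rank_le il.
rewrite /band mulmxBr !mul_pid_mx; case: ltnP => [lt_ji | le_ij].
  have le_ji : (hs j.+1 <= hs i)%N by apply: summand_rank_mono; rewrite lt_ji il.
  by congr (pid_mx _ - pid_mx _); lia.
have le_ij' : (hs i <= hs j)%N by apply: summand_rank_mono; rewrite le_ij ltnW.
rewrite (_ : minn h (minn (hs i) (hs j.+1)) = hs i); last by lia.
by rewrite (_ : minn h (minn (hs i) (hs j)) = hs i) ?subrr; last by lia.
Qed.

Lemma submod_Qpart i : (i <= l)%N -> submod (Qpart i) (Ms i).
Proof.
elim: i => [_ | i IHi il]; first by exists 0; rewrite /Qpart big_geq // mul0mx.
have [[Z PZ] [C MsC]] := (IHi (ltnW il), Ms_mono il).
exists (Z *m C + band i *m Y i.+1).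
by rewrite /Qpart big_nat_recr //= -/(Qpart i) PZ MsC mulmxDl !mulmxA.
Qed.

Lemma pid_Qpart i : (i <= l)%N -> (pid_mx (hs i) : 'M_h) *m Qpart l = Qpart i.
Proof.
move=> il; rewrite /Qpart mulmx_sumr (big_cat_nat (leq0n i) il) /=.
rewrite [X in _ + X]big_nat_cond [X in _ + X]big1 ?addr0 => [|j /andP[/andP[le_ij lt_jl] _]].
  by apply: eq_big_nat => j /andP[_ lt_ji]; rewrite mulmxA pid_band ?lt_ji //; lia.
by rewrite mulmxA pid_band // ltnNge le_ij mul0mx.
Qed.

Lemma red_Qpart : red_mx (Qpart l) = Qbar.
Proof.
rewrite /Qpart /red_mx raddf_sum.
transitivity (\sum_(0 <= j < l) ((pid_mx (hs j.+1) : 'M_h) - pid_mx (hs j)) *m Qbar).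
  apply: eq_big_nat => j /andP[_ jl].
  change (red_mx (band j *m (Y j.+1 *m Ms j.+1)) =
    ((pid_mx (hs j.+1) : 'M_h) - pid_mx (hs j)) *m Qbar).
  rewrite !red_mxM red_fps_cst_mx mulmxKpV ?Qbar_adapted // mulmxA.
  rewrite /red_mx map_mxB !map_pid_mx mulmxBl !mul_pid_mx.
  have le_j : (hs j <= hs j.+1)%N by apply: summand_rank_mono; rewrite leqnSn jl.
  have := summand_rank_le jl; rewrite !minnn => le_h.
  by congr ((pid_mx _ - pid_mx _) *m Qbar); lia.
rewrite -mulmx_suml telescope_sumr // summand_rank_top hs0 pid_mx_1 pid_mx_0 subr0.
exact: mul1mx.
Qed.

Lemma lift_adapted_basis : exists Q : 'M[{fps k}]_h, red_mx Q = Qbar /\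
  forall i, (i <= l)%N -> submod ((pid_mx (hs i) : 'M_h) *m Q) (Ms i).
Proof.
exists (Qpart l); split=> [|i il]; first exact: red_Qpart.
by rewrite pid_Qpart //; apply: submod_Qpart.
Qed.

End Lift.

Lemma summand_flag_adapted_basis : exists Q : 'M[{fps k}]_h, [/\ red_mx Q \in unitmx,
  forall i, (i <= l)%N -> ((pid_mx (hs i) : 'M_h) *m red_mx Q == red_mx (Ms i))%MS &
  forall i, (i <= l)%N -> ((pid_mx (hs i) : 'M_h) *m ext_mx Q == ext_mx (Ms i))%MS].
Proof.
pose W i := <<red_mx (Ms i)>>%MS.
have W0 : W 0 = 0.
  by apply/eqP; rewrite -mxrank_eq0 genmxE (rank_red_summand (leq0n l)) hs0.
have W_mono i : (i < l)%N -> (W i <= W i.+1)%MS.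
  by move=> il; rewrite !genmxE; apply/red_submod/Ms_mono.
have [Qbar unitQbar W_Qbar] := flag_basis W0 W_mono.
have Ms_Qbar i : (i <= l)%N -> ((pid_mx (hs i) : 'M_h) *m Qbar == red_mx (Ms i))%MS.
  by move=> il; have := W_Qbar i il; rewrite !genmxE (rank_red_summand il).
have [Q [red_Q Ms_Q]] := lift_adapted_basis (fun i il => proj1 (andP (Ms_Qbar i il))).
exists Q; rewrite red_Q; split=> // i il.
have sub_Ms : ((pid_mx (hs i) : 'M_h) *m ext_mx Q <= ext_mx (Ms i))%MS.
  by rewrite -(map_pid_mx (@tofrac _)) -ext_mxM; apply/ext_submod/Ms_Q.
have free_extQ : row_free (ext_mx Q) by rewrite row_free_unit ext_unitmx ?red_Q.
apply/andP; split=> //; rewrite -(mxrank_leqif_sup sub_Ms).2 eqn_leq (mxrankS sub_Ms).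
by rewrite mxrankMfree // rank_pid_mx ?summand_rank_le // rank_leq_row.
Qed.

End SummandFlag.

Theorem mainTheorem10 (k : fieldType) (h l : nat) (hs : nat -> nat)
    (Ms : forall i : nat, 'M[{fps k}]_(hs i, h))
    (Lbar : 'M[k]_h) (d' : nat -> nat) :
  (* 0 = M_0 ⊆ M_1 ⊆ ... ⊆ M_l = M, each M_i a direct summand, free of rank h_i *)
  hs 0%N = 0%N ->
  (forall i, (i <= l)%N -> basis_of_direct_summand (Ms i)) ->
  (forall i, (i < l)%N -> submod (Ms i) (Ms i.+1)) ->
  submod (1%:M : 'M[{fps k}]_h) (Ms l) ->
  (* the integers d'_i *)
  d' 0%N = 0%N ->
  d' l = \rank (Lbar :&: red_mx (Ms l))%MS ->
  (forall i, (i < l)%N ->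
     (d' i <= d' i.+1)%N /\ (d' i.+1 + hs i <= d' i + hs i.+1)%N) ->
  (forall i, (1 <= i < l)%N -> (d' i <= \rank (Lbar :&: red_mx (Ms i))%MS)%N) ->
  exists (r : nat) (L : 'M[{fps k}]_(r, h)),
    [/\ basis_of_direct_summand L,
        (red_mx L == Lbar)%MS &
        forall i, (1 <= i <= l)%N ->
          \rank (ext_mx L :&: ext_mx (Ms i))%MS = d' i].
Proof.
move=> hs0 Ms_summand Ms_mono Ms_full d0 d_l step d_le.
have hs_l := summand_rank_top Ms_summand Ms_full.
have [Q [unitQ red_Q ext_Q]] := summand_flag_adapted_basis hs0 Ms_summand Ms_mono Ms_full.
pose Lb := Lbar *m invmx (red_mx Q).
have Lb_cap i : (i <= l)%N ->
    \rank (Lb :&: (pid_mx (hs i) : 'M_h))%MS = \rank (Lbar :&: red_mx (Ms i))%MS.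
  move=> il; rewrite -(mxrank_cap_mulmx _ _ unitQ) mulmxKV //.
  exact: (cap_eqmx (eqmx_refl _) (eqmxP (red_Q i il))).1.
have Lb_l : d' l = \rank Lb by rewrite d_l -(Lb_cap l (leqnn l)) hs_l pid_mx_1 capmx1.
have d_le_Lb i : (i <= l)%N -> (d' i <= \rank (Lb :&: (pid_mx (hs i) : 'M_h)))%N.
  rewrite leq_eqVlt => /orP[/eqP -> | lt_il]; first by rewrite (Lb_cap l (leqnn l)) d_l leqnn.
  rewrite (Lb_cap i (ltnW lt_il)); case: (posnP i) => [-> | i_gt0]; first by rewrite d0.
  by apply: d_le; rewrite i_gt0 lt_il.
have [r [L [freeL redL extL]]] := coordinate_flag_lift hs0 hs_l d0 step d_le_Lb Lb_l.
exists r, (L *m Q); split.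
- by apply/direct_summandP; rewrite red_mxM /row_free mxrankMfree ?row_free_unit.
- by rewrite red_mxM -[Lbar](mulmxKV unitQ); apply/eqmxP/eqmxMr/eqmxP.
- move=> i /andP[_ il]; rewrite ext_mxM.
  rewrite -(cap_eqmx (eqmx_refl (ext_mx L *m ext_mx Q)) (eqmxP (ext_Q i il))).1.
  by rewrite mxrank_cap_mulmx ?ext_unitmx // extL.
Qed.
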